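(* Let $(a,b,c)\in\mathbb{R}^3\setminus\{(0,0,0)\}$, $A_1=(a,b,c)$ and $A_2=(-ae^{c},-be^{-c},-c)$ (the point on the translation curve through the origin and $A_1$ symmetric to $A_1$ with respect to the origin), and let $0<\alpha<\pi$. A point $P=(x,y,z)\in\mathbf{Sol}\setminus\{A_1,A_2\}$ belongs to the translation-like $\alpha$-isoptic surface of the translation-like segment $\overline{A_1A_2}$ if and only if $$\cos\alpha=\frac{e^{z}(x+ae^{c})(x-a)+e^{-z}(y+be^{-c})(y-b)+4\sinh\frac{z+c}{2}\sinh\frac{z-c}{2}}{\sqrt{e^{z+c}(x-a)^2+e^{-(z+c)}(y-b)^2+4\sinh^2\frac{z-c}{2}}\;\sqrt{e^{z-c}(x+ae^{c})^2+e^{-(z-c)}(y+be^{-c})^2+4\sinh^2\frac{z+c}{2}}}.$$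
   Context: $\mathbf{Sol}$ is $\mathbb{R}^3$ with coordinates $(x,y,z)$, group law $(a,b,c)(x,y,z)=(x+ae^{-z},\,y+be^{z},\,z+c)$, and left-invariant metric $ds^2=e^{2z}dx^2+e^{-2z}dy^2+dz^2$. For $P=(p_1,p_2,p_3)$ let $T_P$ be the isometry $(X,Y,Z)\mapsto(p_1+Xe^{-p_3},\,p_2+Ye^{p_3},\,p_3+Z)$, which maps the origin to $P$. The translation curve starting at the origin with initial unit vector $(u,v,w)$ is $t\mapsto\big(-\tfrac{u}{w}(e^{-wt}-1),\tfrac{v}{w}(e^{wt}-1),wt\big)$ if $w\neq0$ and $t\mapsto(ut,vt,0)$ if $w=0$; every point of $\mathbf{Sol}$ lies on exactly one such curve from the origin (with $t\ge0$). The translation curve from $P$ to $Q$ is the image under $T_P$ of the translation curve from the origin to $T_P^{-1}(Q)$. A translation-like segment $\overline{A_1A_2}$ is the arc of a translation curve between $A_1$ and $A_2$ (only its endpoints matter here). The translation-like $\alpha$-isoptic surface of $\overline{A_1A_2}$ is the set of points $P\notin\{A_1,A_2\}$ such that the angle at $P$, measured with the metric at $P$, between the initial tangent vectors of the translation curves from $P$ to $A_1$ and from $P$ to $A_2$ equals $\alpha$. For $\alpha=\pi/2$ it is called the translation-like Thaloid. *)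

From Stdlib Require Import Reals.
Open Scope R_scope.

(* Points of Sol = R^3 and tangent vectors, as triples (x, y, z). *)
Definition pt := (R * R * R)%type.

(* Translation curve from the origin with initial unit vector (u,v,w). *)
Definition tcurve (u v w t : R) : pt :=
  if Req_EM_T w 0 then (u * t, v * t, 0)
  else (- (u / w) * (exp (- w * t) - 1), (v / w) * (exp (w * t) - 1), w * t).

Definition T (P Q : pt) : pt :=
  let '(p1, p2, p3) := P in let '(X, Y, Z) := Q in
  (p1 + X * exp (- p3), p2 + Y * exp p3, p3 + Z).

Definition Tinv (P Q : pt) : pt :=
  let '(p1, p2, p3) := P in let '(q1, q2, q3) := Q in
  ((q1 - p1) * exp p3, (q2 - p2) * exp (- p3), q3 - p3).

Definition dT (P V : pt) : pt :=
  let '(p1, p2, p3) := P in let '(u, v, w) := V in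
  (u * exp (- p3), v * exp p3, w).

Definition init_dir_origin (Q d : pt) : Prop :=
  let '(u, v, w) := d in
  u ^ 2 + v ^ 2 + w ^ 2 = 1 /\ exists t, 0 <= t /\ tcurve u v w t = Q.

(* V (tangent vector at P) is the initial tangent vector of the translation
   curve from P to Q, i.e. the image under T_P of the one from the origin
   to T_P^{-1}(Q). *)
Definition init_tangent (P Q V : pt) : Prop :=
  exists d, init_dir_origin (Tinv P Q) d /\ V = dT P d.

Definition gP (P V W : pt) : R :=
  let '(p1, p2, p3) := P in let '(v1, v2, v3) := V in let '(w1, w2, w3) := W in
  exp (2 * p3) * v1 * w1 + exp (- (2 * p3)) * v2 * w2 + v3 * w3.

Definition angleP (P V W : pt) : R :=
  acos (gP P V W / (sqrt (gP P V V) * sqrt (gP P W W))).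

Definition isoptic (alpha : R) (A1 A2 P : pt) : Prop :=
  P <> A1 /\ P <> A2 /\
  exists V1 V2, init_tangent P A1 V1 /\ init_tangent P A2 V2 /\
                angleP P V1 V2 = alpha.

From Stdlib Require Import Reals Lra Psatz.
Open Scope R_scope.

(* The differential of T_P carries the Euclidean metric at the origin onto the
   metric at P, so the angle at P is the Euclidean angle between the initial
   directions at the origin of the translation curves to T_P^{-1}(A_1) and
   T_P^{-1}(A_2).  Along the translation curve with unit initial vector d, the
   point Q = (q1, q2, q3) reached at time t >= 0 satisfies
   (q1 e^{q3/2}, q2 e^{-q3/2}, 2 sinh (q3/2)) = chord(w, t) d with chord >= 0,
   so this vector, normalized, is the initial direction towards Q; the stated
   formula is the cosine of the angle between two such vectors. *)

Definition dot (V W : pt) : R :=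
  let '(v1, v2, v3) := V in let '(w1, w2, w3) := W in v1 * w1 + v2 * w2 + v3 * w3.

Definition vnorm (V : pt) : R := sqrt (dot V V).

Definition vscale (k : R) (V : pt) : pt :=
  let '(v1, v2, v3) := V in (k * v1, k * v2, k * v3).

Definition normalize (V : pt) : pt := vscale (/ vnorm V) V.

Definition cos_angle (V W : pt) : R := dot V W / (vnorm V * vnorm W).

Definition chord (w t : R) : R :=
  if Req_EM_T w 0 then t else 2 * sinh (w * t / 2) / w.

Definition tdir (Q : pt) : pt :=
  let '(q1, q2, q3) := Q in
  (q1 * exp (q3 / 2), q2 * exp (- (q3 / 2)), 2 * sinh (q3 / 2)).

Lemma sinh_opp x : sinh (- x) = - sinh x.
Proof. unfold sinh. rewrite Ropp_involutive. field. Qed.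

Lemma sinh_neq0 x : x <> 0 -> sinh x <> 0.
Proof.
  intro Hx. rewrite <- sinh_0.
  destruct (Rdichotomy _ _ Hx) as [H | H]; apply sinh_lt in H; lra.
Qed.

Lemma mult_sinh_ge0 x : 0 <= x * sinh x.
Proof.
  destruct (Rtotal_order x 0) as [H | [-> | H]].
  - assert (sinh x < 0) by (rewrite <- sinh_0; now apply sinh_lt). nra.
  - lra.
  - assert (0 < sinh x) by (rewrite <- sinh_0; now apply sinh_lt). nra.
Qed.

Lemma exp_half_sqr x : exp (x / 2) * exp (x / 2) = exp x.
Proof. rewrite <- exp_plus. f_equal. field. Qed.

Lemma exp_half_inv x : exp (- (x / 2)) * exp (x / 2) = 1.
Proof. rewrite <- exp_plus, <- exp_0. f_equal. ring. Qed.

Lemma mult_chord w t : w * chord w t = 2 * sinh (w * t / 2).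
Proof.
  unfold chord. destruct (Req_EM_T w 0) as [-> | Hw].
  - replace (0 * t / 2) with 0 by field. rewrite sinh_0. ring.
  - field. exact Hw.
Qed.

Lemma chord_ge0 w t : 0 <= t -> 0 <= chord w t.
Proof.
  intro Ht. unfold chord. destruct (Req_EM_T w 0) as [_ | Hw]; [exact Ht |].
  destruct (Req_dec t 0) as [-> | Ht0].
  - replace (w * 0 / 2) with 0 by field. rewrite sinh_0. lra.
  (* chord w t * (w^2 t) = 4 s sinh s  with  s = w t / 2 *)
  - assert (Hs := mult_sinh_ge0 (w * t / 2)).
    assert (E : 2 * sinh (w * t / 2) / w * (w * w * t) = 4 * (w * t / 2 * sinh (w * t / 2)))
      by (field; exact Hw).
    assert (0 < w * w * t) by (assert (0 < w * w) by nra; nra).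
    nra.
Qed.

Lemma tcurve_chord u v w t :
  tcurve u v w t =
  (u * chord w t * exp (- (w * t / 2)), v * chord w t * exp (w * t / 2), w * t).
Proof.
  unfold tcurve, chord. destruct (Req_EM_T w 0) as [-> | Hw].
  - replace (0 * t / 2) with 0 by field. rewrite Ropp_0, exp_0, !Rmult_0_l.
    f_equal; f_equal; ring.
  - assert (HE := exp_pos (w * t / 2)).
    assert (Hinv : exp (- (w * t / 2)) = / exp (w * t / 2)) by apply exp_Ropp.
    assert (Hsq : exp (w * t) = exp (w * t / 2) * exp (w * t / 2))
      by (now rewrite exp_half_sqr).
    assert (Hneg : exp (- w * t) = / (exp (w * t / 2) * exp (w * t / 2)))
      by (rewrite <- Hsq, <- exp_Ropp; f_equal; ring).
    unfold sinh. rewrite Hneg, Hsq, Hinv. f_equal; f_equal; field; lra.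
Qed.

Lemma tdir_tcurve u v w t : tdir (tcurve u v w t) = vscale (chord w t) (u, v, w).
Proof.
  rewrite tcurve_chord. simpl. rewrite <- mult_chord.
  rewrite !Rmult_assoc, exp_half_inv, (Rmult_comm (exp (w * t / 2))), exp_half_inv.
  f_equal; [f_equal |]; ring.
Qed.

Lemma dot_normalize V W : 0 < dot V V -> 0 < dot W W ->
  dot (normalize V) (normalize W) = cos_angle V W.
Proof.
  unfold normalize, cos_angle, vnorm. intros HV HW.
  assert (0 < sqrt (dot V V)) by (apply sqrt_lt_R0; lra).
  assert (0 < sqrt (dot W W)) by (apply sqrt_lt_R0; lra).
  destruct V as [[v1 v2] v3], W as [[w1 w2] w3]. simpl in *. field. split; lra.
Qed.

Lemma normalize_unit V : 0 < dot V V -> dot (normalize V) (normalize V) = 1.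
Proof.
  intro HV. rewrite dot_normalize by exact HV. unfold cos_angle, vnorm.
  rewrite sqrt_sqrt by lra. field. lra.
Qed.

Lemma normalize_vscale d l : dot d d = 1 -> 0 < l -> normalize (vscale l d) = d.
Proof.
  destruct d as [[u v] w]. unfold normalize, vnorm. simpl. intros Hd Hl.
  replace (l * u * (l * u) + l * v * (l * v) + l * w * (l * w)) with (l * l) by nra.
  rewrite sqrt_square by lra. f_equal; [f_equal |]; field; lra.
Qed.

Lemma unit_dot_bound d e : dot d d = 1 -> dot e e = 1 -> -1 <= dot d e <= 1.
Proof.
  destruct d as [[u v] w], e as [[u' v'] w']. simpl. intros Hd He.
  assert (0 <= (u - u') ^ 2 + (v - v') ^ 2 + (w - w') ^ 2) by
    (apply Rplus_le_le_0_compat; [apply Rplus_le_le_0_compat |]; apply pow2_ge_0).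
  assert (0 <= (u + u') ^ 2 + (v + v') ^ 2 + (w + w') ^ 2) by
    (apply Rplus_le_le_0_compat; [apply Rplus_le_le_0_compat |]; apply pow2_ge_0).
  split; nra.
Qed.

Lemma gP_dT P d e : gP P (dT P d) (dT P e) = dot d e.
Proof.
  destruct P as [[p1 p2] p3], d as [[u v] w], e as [[u' v'] w']. simpl.
  rewrite <- (exp_half_sqr (2 * p3)), (exp_Ropp (2 * p3)), <- (exp_half_sqr (2 * p3)).
  replace (2 * p3 / 2) with p3 by field. rewrite exp_Ropp.
  field. apply Rgt_not_eq, exp_pos.
Qed.

Lemma angleP_dT P d e : dot d d = 1 -> dot e e = 1 ->
  angleP P (dT P d) (dT P e) = acos (dot d e).
Proof.
  intros Hd He. unfold angleP. rewrite !gP_dT, Hd, He, sqrt_1, Rmult_1_r, Rdiv_1_r.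
  reflexivity.
Qed.

Lemma tdir_dot_pos Q : Q <> (0, 0, 0) -> 0 < dot (tdir Q) (tdir Q).
Proof.
  destruct Q as [[q1 q2] q3]. simpl. intro HQ.
  assert (0 <= q1 * exp (q3 / 2) * (q1 * exp (q3 / 2))) by nra.
  assert (0 <= q2 * exp (- (q3 / 2)) * (q2 * exp (- (q3 / 2)))) by nra.
  destruct (Req_dec q3 0) as [-> | Hq3].
  - replace (0 / 2) with 0 by field. rewrite Ropp_0, exp_0, sinh_0.
    destruct (Req_dec q1 0) as [-> | Hq1]; [destruct (Req_dec q2 0) as [-> | Hq2] |].
    + contradiction.
    + nra.
    + nra.
  - assert (sinh (q3 / 2) <> 0) by (apply sinh_neq0; lra). nra.
Qed.

Lemma init_dir_origin_unique Q d : Q <> (0, 0, 0) ->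
  init_dir_origin Q d -> d = normalize (tdir Q).
Proof.
  destruct d as [[u v] w]. intros HQ [Hd [t [Ht HQt]]].
  assert (Hpos := tdir_dot_pos Q HQ).
  rewrite <- HQt, tdir_tcurve in Hpos |- *.
  assert (Hl := chord_ge0 w t Ht).
  assert (chord w t <> 0) by (intro Hl0; rewrite Hl0 in Hpos; simpl in Hpos; lra).
  rewrite normalize_vscale; [reflexivity | simpl; nra | lra].
Qed.

Lemma init_dir_origin_tdir Q : Q <> (0, 0, 0) ->
  init_dir_origin Q (normalize (tdir Q)).
Proof.
  intro HQ. assert (Hpos := tdir_dot_pos Q HQ). assert (Hunit := normalize_unit _ Hpos).
  destruct Q as [[q1 q2] q3].
  unfold normalize in *. set (N := vnorm _) in *.
  assert (HN : 0 < N) by (apply sqrt_lt_R0; exact Hpos).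
  simpl in Hunit |- *. split; [lra |].
  set (w := / N * (2 * sinh (q3 / 2))).
  assert (Hreach : forall t, 0 <= t -> w * t = q3 -> chord w t = N ->
    exists t, 0 <= t /\ tcurve (/ N * (q1 * exp (q3 / 2))) (/ N * (q2 * exp (- (q3 / 2)))) w t
                        = (q1, q2, q3)).
  { intros t Ht Hwt Hchord. exists t. split; [exact Ht |].
    rewrite tcurve_chord, Hwt, Hchord.
    assert (He : exp (q3 / 2) <> 0) by apply Rgt_not_eq, exp_pos.
    rewrite exp_Ropp. f_equal; f_equal; field; split; assumption || lra. }
  destruct (Req_EM_T q3 0) as [Hq3 | Hq3].
  - apply (Hreach N); [lra | | ].
    + unfold w. rewrite Hq3. replace (0 / 2) with 0 by field. rewrite sinh_0. ring.
    + unfold chord. destruct (Req_EM_T w 0) as [_ | Hw]; [reflexivity |].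
      exfalso. apply Hw. unfold w. rewrite Hq3. replace (0 / 2) with 0 by field. rewrite sinh_0. ring.
  - assert (Hs : sinh (q3 / 2) <> 0) by (apply sinh_neq0; lra).
    assert (Hw : w <> 0) by (unfold w; apply Rmult_integral_contrapositive; split;
                             [apply Rinv_neq_0_compat |]; lra).
    apply (Hreach (q3 / w)).
    + replace (q3 / w) with (q3 / 2 * sinh (q3 / 2) * (N / (sinh (q3 / 2) * sinh (q3 / 2))))
        by (unfold w; field; split; lra).
      apply Rmult_le_pos; [apply mult_sinh_ge0 |].
      apply Rlt_le, Rdiv_lt_0_compat; [exact HN |]. nra.
    + field. exact Hw.
    + unfold chord. destruct (Req_EM_T w 0) as [Hw0 | _]; [contradiction |].
      replace (w * (q3 / w) / 2) with (q3 / 2) by (field; exact Hw).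
      unfold w. field. split; lra.
Qed.

Lemma Tinv_neq0 P Q : Q <> P -> Tinv P Q <> (0, 0, 0).
Proof.
  destruct P as [[p1 p2] p3], Q as [[q1 q2] q3]. simpl. intros HQ H0.
  injection H0 as H1 H2 H3. apply HQ.
  assert (exp p3 <> 0) by apply Rgt_not_eq, exp_pos.
  assert (exp (- p3) <> 0) by apply Rgt_not_eq, exp_pos.
  apply Rmult_integral in H1, H2.
  f_equal; [f_equal |]; lra.
Qed.

Lemma init_tangent_iff P Q V : Q <> P ->
  init_tangent P Q V <-> V = dT P (normalize (tdir (Tinv P Q))).
Proof.
  intro HQ. assert (HQ0 := Tinv_neq0 P Q HQ). split.
  - intros [d [Hd ->]]. now rewrite (init_dir_origin_unique _ d HQ0 Hd).
  - intros ->. exists (normalize (tdir (Tinv P Q))).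
    split; [now apply init_dir_origin_tdir | reflexivity].
Qed.

Lemma isoptic_iff alpha A1 A2 P : 0 < alpha < PI -> P <> A1 -> P <> A2 ->
  isoptic alpha A1 A2 P <->
  cos alpha = cos_angle (tdir (Tinv P A1)) (tdir (Tinv P A2)).
Proof.
  intros Halpha H1 H2.
  assert (Hpos1 := tdir_dot_pos _ (Tinv_neq0 P A1 (not_eq_sym H1))).
  assert (Hpos2 := tdir_dot_pos _ (Tinv_neq0 P A2 (not_eq_sym H2))).
  rewrite <- (dot_normalize _ _ Hpos1 Hpos2).
  assert (Hu1 := normalize_unit _ Hpos1). assert (Hu2 := normalize_unit _ Hpos2).
  assert (Hangle := angleP_dT P _ _ Hu1 Hu2).
  unfold isoptic. split.
  - intros [_ [_ [V1 [V2 [HV1 [HV2 HV]]]]]].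
    rewrite init_tangent_iff in HV1, HV2 by auto. subst V1 V2.
    rewrite <- HV, Hangle. now rewrite cos_acos by (apply unit_dot_bound; assumption).
  - intro Hcos. split; [exact H1 | split; [exact H2 |]].
    exists (dT P (normalize (tdir (Tinv P A1)))), (dT P (normalize (tdir (Tinv P A2)))).
    rewrite !init_tangent_iff by auto.
    split; [reflexivity | split; [reflexivity |]].
    rewrite Hangle, <- Hcos. apply acos_cos. lra.
Qed.

Lemma tdir_Tinv p1 p2 p3 q1 q2 q3 :
  tdir (Tinv (p1, p2, p3) (q1, q2, q3)) =
  ((q1 - p1) * exp ((p3 + q3) / 2), (q2 - p2) * exp (- ((p3 + q3) / 2)),
   2 * sinh ((q3 - p3) / 2)).
Proof.
  simpl. rewrite !Rmult_assoc, <- !exp_plus.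
  replace (p3 + (q3 - p3) / 2) with ((p3 + q3) / 2) by field.
  replace (- p3 + - ((q3 - p3) / 2)) with (- ((p3 + q3) / 2)) by field.
  reflexivity.
Qed.

Lemma dot_tdir_Tinv p1 p2 p3 q1 q2 q3 r1 r2 r3 :
  dot (tdir (Tinv (p1, p2, p3) (q1, q2, q3))) (tdir (Tinv (p1, p2, p3) (r1, r2, r3))) =
  (q1 - p1) * (r1 - p1) * exp (p3 + (q3 + r3) / 2)
  + (q2 - p2) * (r2 - p2) * exp (- (p3 + (q3 + r3) / 2))
  + 4 * sinh ((q3 - p3) / 2) * sinh ((r3 - p3) / 2).
Proof.
  rewrite !tdir_Tinv. simpl.
  replace (p3 + (q3 + r3) / 2) with ((p3 + q3) / 2 + (p3 + r3) / 2) by field.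
  rewrite Ropp_plus_distr, !exp_plus. ring.
Qed.

Theorem theorem4p1 (a b c alpha x y z : R) :
  (a, b, c) <> (0, 0, 0) ->
  0 < alpha < PI ->
  (x, y, z) <> (a, b, c) ->
  (x, y, z) <> (- a * exp c, - b * exp (- c), - c) ->
  (isoptic alpha (a, b, c) (- a * exp c, - b * exp (- c), - c) (x, y, z) <->
   cos alpha =
     (exp z * (x + a * exp c) * (x - a) + exp (- z) * (y + b * exp (- c)) * (y - b)
        + 4 * sinh ((z + c) / 2) * sinh ((z - c) / 2))
     / (sqrt (exp (z + c) * (x - a) ^ 2 + exp (- (z + c)) * (y - b) ^ 2
              + 4 * sinh ((z - c) / 2) ^ 2)
        * sqrt (exp (z - c) * (x + a * exp c) ^ 2 + exp (- (z - c)) * (y + b * exp (- c)) ^ 2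
              + 4 * sinh ((z + c) / 2) ^ 2))).
Proof.
  (* The characterization does not need the segment to be nondegenerate. *)
  intros _ Halpha H1 H2.
  rewrite isoptic_iff by assumption.
  unfold cos_angle, vnorm. rewrite !dot_tdir_Tinv.
  replace (z + (c + - c) / 2) with z by field.
  replace (z + (c + c) / 2) with (z + c) by field.
  replace (z + (- c + - c) / 2) with (z - c) by field.
  replace ((c - z) / 2) with (- ((z - c) / 2)) by field.
  replace ((- c - z) / 2) with (- ((z + c) / 2)) by field.
  rewrite !sinh_opp.
  match goal with |- _ = ?X <-> _ = ?Y => replace X with Y; [reflexivity |] end.
  f_equal; [ring |]. f_equal; f_equal; ring.
Qed.
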